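(* Let $f\in P_k^n$ with $2\le ess(f)=n\le k$. Then (i) $\frac{n(n-1)}{2}\le cmr(f)\le \frac{n!(n-1)!}{2^{n-2}}$; (ii) $1\le mnr(f)\le \frac{n!(n-1)!}{2^{n-2}}$.
   Context: $Z_k=\{0,\dots,k-1\}$; $P_k^n$ is the set of all maps $Z_k^n\to Z_k$ in variables $x_1,\dots,x_n$. A variable $x_i$ is essential in $f$ if changing only the $i$-th argument can change the value of $f$; $Ess(f)$ is the set of essential variables, $ess(f)=|Ess(f)|$. For distinct essential $x_i,x_j$, $f_{i\leftarrow j}(a_1,\dots,a_n)=f(a_1,\dots,a_{i-1},a_j,a_{i+1},\dots,a_n)$; $f\rhd h$ means $h=f_{i\leftarrow j}$ for some such $i,j$; $Mnr(f)$ is the set of functions obtained from $f$ by one or more steps of $\rhd$. Two functions are equivalent ($\equiv$) if one is obtained from the other by permuting variables and introducing/deleting inessential variables; $mnr(f)$ is the number of $\equiv$-classes of distinct minors in $Mnr(f)$. The complexity $cmr$ is defined recursively: $cmr(f)=1$ if $ess(f)\le1$; $cmr(f)=2$ if $ess(f)=2$; and $cmr(f)=\sum_{j<i,\ x_i,x_j\in Ess(f)} cmr(f_{i\leftarrow j})$ if $ess(f)\ge3$. *)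

From mathcomp Require Import all_boot all_fingroup.
Set Implicit Arguments. Unset Strict Implicit. Unset Printing Implicit Defensive.

(* Z_k = 'I_k ; argument tuples (a_1,...,a_n) are finite functions 'I_n -> 'I_k;
   P_k^n is the (finite) type of maps from tuples to Z_k. *)
Definition tup (n k : nat) := {ffun 'I_n -> 'I_k}.
Definition PF (n k : nat) := {ffun tup n k -> 'I_k}.

Section Defs.
Variables n k : nat.

Definition upd (a : tup n k) (i : 'I_n) (c : 'I_k) : tup n k :=
  [ffun l => if l == i then c else a l].

Definition essential (f : PF n k) (i : 'I_n) : bool :=
  [exists a : tup n k, exists c : 'I_k, f a != f (upd a i c)].

Definition Ess (f : PF n k) : {set 'I_n} := [set i | essential f i].
Definition ess (f : PF n k) : nat := #|Ess f|.

Definition subst_var (f : PF n k) (i j : 'I_n) : PF n k :=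
  [ffun a : tup n k => f [ffun l => if l == i then a j else a l]].

Definition rhd : rel (PF n k) := fun f h =>
  [exists i : 'I_n, exists j : 'I_n,
     [&& i != j, i \in Ess f, j \in Ess f & h == subst_var f i j]].

Definition minorb (f h : PF n k) : bool :=
  [exists g : PF n k, rhd f g && connect rhd g h].

Definition Mnr (f : PF n k) : {set PF n k} := [set h | minorb f h].

Definition equivb (g h : PF n k) : bool :=
  [exists s : {perm 'I_n}, [forall a : tup n k, h a == g [ffun l => a (s l)]]].

Definition mnr (f : PF n k) : nat :=
  #|[set [set h' in Mnr f | equivb h h'] | h in Mnr f]|.

(* cmr, with fuel (ess strictly decreases along f |-> f_{i<-j}) *)
Fixpoint cmr_rec (m : nat) (f : PF n k) : nat :=
  if ess f <= 1 then 1
  else if ess f == 2 then 2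
  else match m with
       | 0 => 1
       | m'.+1 => \sum_(i in Ess f) \sum_(j in Ess f | j < i) cmr_rec m' (subst_var f i j)
       end.

Definition cmr (f : PF n k) : nat := cmr_rec n f.

End Defs.

From mathcomp Require Import all_boot all_fingroup zify.
Set Implicit Arguments. Unset Strict Implicit. Unset Printing Implicit Defensive.

(* A substitution f_{i<-j} between distinct essential variables makes x_i
   inessential and creates no new essential variable, so ess drops.  Hence
   cmr f is a sum of 'C(ess f, 2) terms, each at least 1 and, by induction on
   ess, at most cmr_bound (ess f - 1); this gives
   n(n-1)/2 <= cmr f <= cmr_bound n = n!(n-1)!/2^(n-2).
   Every minor of f is f precomposed with a self-map r of the variables, and
   up to a permutation of the variables r can be taken with r l <= l for all
   l; so there are at most n! classes of minors, and n! <= n!(n-1)!/2^(n-2). *)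

Lemma sum_ltn_pairs n (E : {set 'I_n}) :
  (\sum_(i in E) \sum_(j in E | j < i) 1) * 2 = #|E| * (#|E| - 1).
Proof.
set S := \sum_(i in E) _.
have cardE1 : #|E| = \sum_(i in E) 1 by rewrite sum1_card.
have S_gt : S = \sum_(i in E) \sum_(j in E) ((j < i) : nat).
  by apply: eq_bigr => i _; rewrite big_mkcondr.
have S_lt : S = \sum_(i in E) \sum_(j in E) ((i < j) : nat).
  by rewrite S_gt exchange_big.
have diag : \sum_(i in E) \sum_(j in E) ((i == j) : nat) = #|E|.
  rewrite cardE1; apply: eq_bigr => i iE.
  rewrite (bigD1 i) //= eqxx big1 //= => j /andP[_ ne].
  by rewrite eq_sym (negbTE ne).
have trichotomy :
    \sum_(i in E) \sum_(j in E) (((j < i) : nat) + (i < j) + (i == j)) = #|E| * #|E|.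
  rewrite {1}cardE1 big_distrl /=; apply: eq_bigr => i _.
  rewrite mul1n cardE1; apply: eq_bigr => j _.
  by rewrite -(inj_eq val_inj) /=; case: (ltngtP i j).
have : S + S + #|E| = #|E| * #|E|.
  rewrite -trichotomy -{1}diag {1}S_gt {1}S_lt -!big_split /=.
  by apply: eq_bigr => i _; rewrite -!big_split.
case: #|E| => [|m]; first by lia.
rewrite subSS mulSn; lia.
Qed.

Lemma sum_ltn_pairs_bin n (E : {set 'I_n}) :
  \sum_(i in E) \sum_(j in E | j < i) 1 = 'C(#|E|, 2).
Proof. by rewrite bin2 -subn1 -sum_ltn_pairs muln2 doubleK. Qed.

Fixpoint cmr_bound (m : nat) : nat :=
  match m with
  | 0 | 1 => 1
  | 2 => 2
  | m'.+1 => 'C(m'.+1, 2) * cmr_bound m'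
  end.

Lemma cmr_boundS m : 2 <= m -> cmr_bound m.+1 = 'C(m.+1, 2) * cmr_bound m.
Proof. by case: m => [|[|m]]. Qed.

Lemma cmr_bound_homo : {homo cmr_bound : i j / i <= j}.
Proof.
apply: homo_leq => [//|y x z|]; first exact: leq_trans.
case=> [|[|[|m]]] //=.
rewrite -[X in X <= _]mul1n leq_mul2r bin_gt0; lia.
Qed.

Lemma cmr_boundE m : 2 <= m -> cmr_bound m * 2 ^ (m - 2) = m`! * (m - 1)`!.
Proof.
elim: m => [//|[//|[//|m]] IH] _.
have bin2_mul2 : 'C(m.+3, 2) * 2 = m.+3 * m.+2.
  by rewrite -[2]/(2`!) bin_ffact ffactnS ffactn1.
move: IH; rewrite !subSS !subn0 => /(_ isT) IH.
by rewrite cmr_boundS // expnS mulnACA bin2_mul2 IH mulnACA -!factS.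
Qed.

Section Cmr.
Variables n k : nat.
Implicit Types (g : PF n k) (i j : 'I_n).

Lemma Ess_subst_var g i j : i != j -> Ess (subst_var g i j) \subset (j |: Ess g) :\ i.
Proof.
move=> ij; apply/subsetP => l; rewrite !inE /essential.
move=> /existsP[a /existsP[c]]; rewrite !ffunE => g_changes.
have li : l != i.
  apply: contraNneq g_changes => ->; apply/eqP; congr (g _); apply/ffunP => l'.
  by rewrite !ffunE [j == i]eq_sym (negbTE ij); case: ifP.
rewrite li /=; have [//|lj] := eqVneq l j.
apply/existsP; exists [ffun l' => if l' == i then a j else a l'].
apply/existsP; exists c; apply: contra g_changes => /eqP ->.
apply/eqP; congr (g _); apply/ffunP => l'; rewrite !ffunE.
have [->|l'i] // := eqVneq l' i.
by rewrite ![_ == l]eq_sym (negbTE li) (negbTE lj).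
Qed.

Lemma ess_subst_var_lt g i j : i != j -> i \in Ess g -> j \in Ess g ->
  ess (subst_var g i j) < ess g.
Proof.
move=> ij iE jE; apply: leq_ltn_trans (subset_leq_card (Ess_subst_var g ij)) _.
have -> : j |: Ess g = Ess g by apply/setUidPr; rewrite sub1set.
by rewrite /ess (cardsD1 i (Ess g)) iE.
Qed.

Lemma cmr_rec_small m g : ess g <= 2 -> cmr_rec m g = maxn 1 (ess g).
Proof. by case: m => [|m] /=; case: (ess g) => [|[|[|]]]. Qed.

Lemma cmr_rec0 g : 2 < ess g -> cmr_rec 0 g = 1.
Proof. by rewrite /=; case: (ess g) => [|[|[|]]]. Qed.

Lemma cmr_recS m g : 2 < ess g -> cmr_rec m.+1 g =
  \sum_(i in Ess g) \sum_(j in Ess g | j < i) cmr_rec m (subst_var g i j).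
Proof. by rewrite /=; case: (ess g) => [|[|[|]]]. Qed.

Lemma cmr_rec_gt0 m g : 0 < cmr_rec m g.
Proof.
elim: m g => [|m IH] g; have [small|big] := leqP (ess g) 2;
  try by rewrite cmr_rec_small // leq_max.
  by rewrite cmr_rec0.
rewrite cmr_recS //; apply: (@leq_trans 'C(ess g, 2)); first by rewrite bin_gt0; lia.
rewrite -sum_ltn_pairs_bin; apply: leq_sum => i _; apply: leq_sum => j _; exact: IH.
Qed.

Lemma cmr_rec_lower m g : ess g * (ess g - 1) <= 2 * cmr_rec m.+1 g.
Proof.
have [small|big] := leqP (ess g) 2.
  by rewrite cmr_rec_small //; case: (ess g) small => [|[|[|]]].
rewrite cmr_recS // [2 * _]mulnC /ess -sum_ltn_pairs leq_mul2r /=.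
by apply: leq_sum => i _; apply: leq_sum => j _; apply: cmr_rec_gt0.
Qed.

Lemma cmr_rec_upper m g : cmr_rec m g <= cmr_bound (ess g).
Proof.
elim: m g => [|m IH] g; have [small|big] := leqP (ess g) 2;
  try by rewrite cmr_rec_small //; case: (ess g) small => [|[|[|]]].
  by rewrite cmr_rec0 //; exact: (cmr_bound_homo (leq0n _)).
have ess_pred : ess g = (ess g).-1.+1 by lia.
have -> : cmr_bound (ess g) = 'C(ess g, 2) * cmr_bound (ess g).-1.
  by rewrite {1}ess_pred cmr_boundS -?ess_pred //; lia.
rewrite cmr_recS // -(sum_ltn_pairs_bin (Ess g)) big_distrl.
apply: leq_sum => i iE; rewrite big_distrl; apply: leq_sum => j /andP[jE ji] /=.
rewrite mul1n; apply: leq_trans (IH _) (cmr_bound_homo _); rewrite -ltnS -ess_pred.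
by apply: ess_subst_var_lt => //; rewrite neq_ltn ji orbT.
Qed.

End Cmr.

Lemma exists_perm_in (T : finType) (A : {set T}) (f : T -> T) :
  {in A &, injective f} -> exists s : {perm T}, {in A, s =1 f}.
Proof.
move: {2}#|A| (erefl #|A|) => m; elim: m A => [|m IH] A cardA f_inj.
  by exists 1%g => x; rewrite (card0_eq cardA).
have [a aA] : exists a, a \in A by apply/card_gt0P; rewrite cardA.
have cardA' : #|A :\ a| = m by move: cardA; rewrite (cardsD1 a A) aA add1n => -[].
have [s sA'] : exists s : {perm T}, {in A :\ a, s =1 f}.
  by apply: IH cardA' _ => x y /setD1P[_ xA] /setD1P[_ yA]; apply: f_inj.
exists (s * tperm (s a) (f a))%g => x xA; rewrite permM.
have [->|xa] := eqVneq x a; first by rewrite tpermL.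
have xA' : x \in A :\ a by rewrite !inE xa.
rewrite (sA' x xA') tpermD //.
  by apply: contra_neq xa => e; apply: (@perm_inj _ s); rewrite (sA' x xA').
by apply: contra_neq xa => e; apply: f_inj.
Qed.

Section Minors.
Variables n k : nat.
Implicit Types (f g h : PF n k) (r : {ffun 'I_n -> 'I_n}).

Definition relabel f r : PF n k := [ffun a : tup n k => f [ffun l => a (r l)]].

Definition redirect (i j : 'I_n) : {ffun 'I_n -> 'I_n} :=
  [ffun l => if l == i then j else l].

Lemma subst_var_relabel f i j : subst_var f i j = relabel f (redirect i j).
Proof.
apply/ffunP => a; rewrite !ffunE; congr (f _); apply/ffunP => l.
by rewrite !ffunE; case: ifP.
Qed.

Lemma relabel_relabel f r1 r2 :
  relabel (relabel f r1) r2 = relabel f [ffun l => r2 (r1 l)].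
Proof. by apply/ffunP => a; rewrite !ffunE; congr (f _); apply/ffunP => l; rewrite !ffunE. Qed.

Lemma relabel_id f : relabel f [ffun l => l] = f.
Proof. by apply/ffunP => a; rewrite ffunE; congr (f _); apply/ffunP => l; rewrite !ffunE. Qed.

Lemma rhd_relabel f g h :
  rhd g h -> (exists r, g = relabel f r) -> exists r, h = relabel f r.
Proof.
move=> /existsP[i /existsP[j /and4P[_ _ _ /eqP ->]]] [r ->].
by rewrite subst_var_relabel relabel_relabel; eexists.
Qed.

Lemma Mnr_relabel f h : h \in Mnr f -> exists r, h = relabel f r.
Proof.
rewrite inE => /existsP[g /andP[fg /connectP[p g_p ->]]].
have : exists r, g = relabel f r.
  by apply: rhd_relabel fg _; exists [ffun l => l]; rewrite relabel_id.
elim: p g {fg} g_p => [|x p IH] g //= /andP[gx x_p] g_rel.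
exact: IH x_p (rhd_relabel gx g_rel).
Qed.

Definition least_rep r : {ffun 'I_n -> 'I_n} :=
  [ffun l : 'I_n => [arg min_(m < l | r m == r l) (m : nat)]].

Lemma least_repE r l : r (least_rep r l) = r l.
Proof. by rewrite ffunE; case: arg_minnP => // m /eqP. Qed.

Lemma least_rep_leq r l : least_rep r l <= l.
Proof. by rewrite ffunE; case: arg_minnP => // m _ /(_ l (eqxx _)). Qed.

Lemma least_rep_eq r l1 l2 : r l1 = r l2 -> least_rep r l1 = least_rep r l2.
Proof.
move=> e; have := least_repE r l1; have := least_repE r l2; rewrite !ffunE.
case: arg_minnP => // m1 _ min1; case: arg_minnP => // m2 _ min2 rm1 rm2.
apply/val_inj/eqP; rewrite eqn_leq min1 ?min2 //; first by rewrite rm1 e.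
by rewrite rm2 e.
Qed.

Lemma least_rep_perm r : exists s : {perm 'I_n}, forall l, r l = s (least_rep r l).
Proof.
have r_inj : {in [set least_rep r l | l : 'I_n] &, injective r}.
  by move=> _ _ /imsetP[l1 _ ->] /imsetP[l2 _ ->]; rewrite !least_repE => /least_rep_eq.
have [s sr] := exists_perm_in r_inj.
by exists s => l; rewrite sr ?least_repE // imset_f.
Qed.

Lemma equivb_relabel f r h :
  equivb (relabel f r) h = [exists s : {perm 'I_n}, h == relabel f [ffun l => s (r l)]].
Proof.
apply/existsP/existsP => -[s hs]; exists s.
  apply/eqP/ffunP => a; move/forallP: hs => /(_ a) /eqP ->.
  by rewrite !ffunE; congr (f _); apply/ffunP => l; rewrite !ffunE.
apply/forallP => a; move/eqP: hs => ->.
by rewrite !ffunE; apply/eqP; congr (f _); apply/ffunP => l; rewrite !ffunE.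
Qed.

End Minors.

Lemma card_ord_leq n (l : 'I_n) : #|[pred m : 'I_n | m <= l]| <= l.+1.
Proof.
rewrite cardE -(size_map val) -(size_iota 0 l.+1).
apply: uniq_leq_size; first by rewrite (map_inj_uniq val_inj) enum_uniq.
move=> x /mapP[m]; rewrite mem_enum inE => ml ->.
by rewrite mem_iota add0n ltnS.
Qed.

Lemma card_ffun_leq n :
  #|[set c : {ffun 'I_n -> 'I_n} | [forall l, c l <= l]]| <= n`!.
Proof.
rewrite (@eq_card _ _ (family (fun l : 'I_n => [pred m : 'I_n | m <= l]))); last first.
  by move=> c; rewrite inE; apply/forallP/familyP => c_le l; have := c_le l.
rewrite card_family foldrE big_image /= (eq_bigl xpredT) //.
rewrite fact_prod big_add1 big_mkord; apply: leq_prod => l _; exact: card_ord_leq.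
Qed.

Lemma mnr_leq_fact n k (f : PF n k) : mnr f <= n`!.
Proof.
pose cls (c : {ffun 'I_n -> 'I_n}) :=
  [set h in Mnr f | [exists s : {perm 'I_n}, h == relabel f [ffun l => s (c l)]]].
set C := [set c : {ffun 'I_n -> 'I_n} | [forall l, c l <= l]].
suff sub : [set [set h' in Mnr f | equivb h h'] | h in Mnr f] \subset cls @: C.
  exact: leq_trans (subset_leq_card sub) (leq_trans (leq_imset_card _ _) (card_ffun_leq n)).
apply/subsetP => _ /imsetP[h hM ->].
have [r ->] := Mnr_relabel hM; have [s0 r_s0] := least_rep_perm r.
apply/imsetP; exists (least_rep r).
  by rewrite inE; apply/forallP => l; exact: least_rep_leq.
apply/setP => h'; rewrite !inE equivb_relabel; congr (_ && _).
apply/existsP/existsP => -[s /eqP ->].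
  exists (s0 * s)%g; apply/eqP; congr (relabel f _); apply/ffunP => l.
  by rewrite [LHS]ffunE [RHS]ffunE permM -r_s0.
exists (s0^-1 * s)%g; apply/eqP; congr (relabel f _); apply/ffunP => l.
by rewrite [LHS]ffunE [RHS]ffunE permM r_s0 permK.
Qed.

Lemma mnr_gt0 n k (f : PF n k) : 1 < ess f -> 0 < mnr f.
Proof.
move=> /card_gt1P[i [j [iE jE ij]]].
have minor_ij : subst_var f i j \in Mnr f.
  rewrite inE; apply/existsP; exists (subst_var f i j); rewrite connect0 andbT.
  by apply/existsP; exists i; apply/existsP; exists j; rewrite ij iE jE eqxx.
by apply/card_gt0P; exists [set h' in Mnr f | equivb (subst_var f i j) h']; apply: imset_f.
Qed.

Lemma exp2_leq_fact m : 2 ^ m <= m.+1`!.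
Proof. by elim: m => [|m IH] //; rewrite expnS factS leq_mul. Qed.

Theorem theorem14 (n k : nat) (f : PF n k) :
  2 <= n -> n <= k -> ess f = n ->
  (n * (n - 1) <= 2 * cmr f /\ cmr f * 2 ^ (n - 2) <= n`! * (n - 1)`!) /\
  (1 <= mnr f /\ mnr f * 2 ^ (n - 2) <= n`! * (n - 1)`!).
Proof.
move=> n_ge2 _ ess_f.
have fact_bound : n`! * 2 ^ (n - 2) <= n`! * (n - 1)`!.
  by rewrite leq_mul2l (_ : n - 1 = (n - 2).+1) ?exp2_leq_fact ?orbT //; lia.
split; split.
- have -> : cmr f = cmr_rec n.-1.+1 f by rewrite prednK //; lia.
  by have := cmr_rec_lower n.-1 f; rewrite ess_f.
- by rewrite -(cmr_boundE n_ge2) leq_mul2r -[in cmr_bound _]ess_f cmr_rec_upper orbT.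
- by apply: mnr_gt0; rewrite ess_f.
- by apply: leq_trans fact_bound; rewrite leq_mul2r mnr_leq_fact orbT.
Qed.
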